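(* There exist infinitely many pairs $(n_1,n_2)$ of positive integers for each of which there are NFAs $A$ and $B$ over a binary alphabet, with $n_1$ and $n_2$ states respectively, such that there is no infinite tower of prefixes between $L(A)$ and $L(B)$ and there is a tower of prefixes between $L(A)$ and $L(B)$ whose height is superpolynomial in $n_1+n_2$ (that is, along this family the height is not bounded by any polynomial in $n_1+n_2$).
   Context: A string $v$ is a prefix of $w$, written $v\le w$, if $w=vu$ for some string $u$. A sequence $(w_i)_{i=1}^r$ of strings is a tower of prefixes between languages $K$ and $L$ if $w_1\in K\cup L$ and for all $i=1,\dots,r-1$: $w_i\le w_{i+1}$, $w_i\in K$ implies $w_{i+1}\in L$, and $w_i\in L$ implies $w_{i+1}\in K$; $r$ is its height. An infinite tower of prefixes is an infinite sequence with the same properties. *)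

From mathcomp Require Import all_boot.
Set Implicit Arguments. Unset Strict Implicit. Unset Printing Implicit Defensive.

Definition word := seq bool.

Record nfa (n : nat) := NFA {
  nfa_delta : 'I_n -> bool -> 'I_n -> bool;
  nfa_init : 'I_n -> bool;
  nfa_final : 'I_n -> bool }.

Fixpoint nfa_run (n : nat) (A : nfa n) (p : 'I_n) (w : word) (q : 'I_n) : Prop :=
  match w with
  | [::] => p = q
  | a :: w' => exists p', nfa_delta A p a p' /\ nfa_run A p' w' q
  end.

Definition lang (n : nat) (A : nfa n) : word -> Prop :=
  fun w => exists p q, nfa_init A p /\ nfa_final A q /\ nfa_run A p w q.

Definition is_prefix (v w : word) : Prop := exists u, w = v ++ u.

(* A (finite) tower of prefixes between K and L: a nonempty sequence
   w_1, ..., w_r (listed as ws, r = size ws). *)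
Definition tower (K L : word -> Prop) (ws : seq word) : Prop :=
  0 < size ws /\
  (K (nth [::] ws 0) \/ L (nth [::] ws 0)) /\
  (forall i, i.+1 < size ws ->
     is_prefix (nth [::] ws i) (nth [::] ws i.+1) /\
     (K (nth [::] ws i) -> L (nth [::] ws i.+1)) /\
     (L (nth [::] ws i) -> K (nth [::] ws i.+1))).

Definition height (ws : seq word) : nat := size ws.

Definition inf_tower (K L : word -> Prop) (w : nat -> word) : Prop :=
  (K (w 0) \/ L (w 0)) /\
  (forall i,
     is_prefix (w i) (w i.+1) /\
     (K (w i) -> L (w i.+1)) /\
     (L (w i) -> K (w i.+1))).

(* The two automata share their T^2 + 2 states and their transitions and differ only in
   their final state.  The grid state j + c * T (j, c < T) lies in column j and row c; the
   row records how many b's (= true) were just read.  Row 0 carries a T-bit binary counter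
   whose set bits are the reachable row-0 states: reading b^nu a, with nu the lowest set
   bit, walks each column up to row nu and then performs a decrement, and the final a also
   reaches the marker T^2 (final in A) or T^2 + 1 (final in B) according to the parity of
   the counter.  Counting down from 2^T - 1 gives a tower of height 2^T - 1, exponential in
   the number of states.
   Conversely, give column j the weight 2^j and the markers weight 0.  The weight of the
   reachable set never increases along a word and drops strictly whenever a marker becomes
   reachable.  The languages are disjoint, so consecutive words of a tower differ and the
   weight strictly decreases along any tower: no tower is infinite. *)

From mathcomp Require Import all_boot zify.
Set Implicit Arguments. Unset Strict Implicit. Unset Printing Implicit Defensive.

Section SubsetConstruction.
Variables (n : nat) (A : nfa n).

Definition nfa_step (S : {set 'I_n}) (x : bool) : {set 'I_n} :=
  [set q | [exists p in S, nfa_delta A p x q]].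

Definition nfa_reach (w : word) : {set 'I_n} :=
  foldl nfa_step [set p | nfa_init A p] w.

Lemma mem_foldl_step S w q :
  q \in foldl nfa_step S w <-> exists2 p, p \in S & nfa_run A p w q.
Proof.
elim: w S => [|x w IHw] S /=; first by split=> [qS | [p pS <-]]; first exists q.
rewrite IHw; split=> [[p' /[!inE] /exists_inP[p pS dp] run_p'] | [p pS [p' [dp run_p']]]].
  by exists p => //; exists p'.
by exists p' => //; rewrite inE; apply/exists_inP; exists p.
Qed.

Lemma nfa_reach_rcons w x : nfa_reach (rcons w x) = nfa_step (nfa_reach w) x.
Proof. exact: foldl_rcons. Qed.

Lemma mem_nfa_reach_cat w u p q :
  p \in nfa_reach w -> nfa_run A p u q -> q \in nfa_reach (w ++ u).
Proof. by move=> pw pq; rewrite /nfa_reach foldl_cat; apply/mem_foldl_step; exists p. Qed.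

Lemma lang_reach w : lang A w <-> exists2 q, nfa_final A q & q \in nfa_reach w.
Proof.
split=> [[p [q [ip [fq pq]]]] | [q fq /mem_foldl_step[p /[!inE] ip pq]]].
  by exists q => //; apply/mem_foldl_step; exists p; rewrite ?inE.
by exists p, q.
Qed.

Lemma nfa_run_cat p u v q r :
  nfa_run A p u r -> nfa_run A r v q -> nfa_run A p (u ++ v) q.
Proof.
elim: u p => [|x u IHu] p /=; first by move->.
by move=> [p' [dp p'r]] rq; exists p'; split; last exact: IHu.
Qed.

Variable wt : 'I_n -> nat.

Definition weight (S : {set 'I_n}) : nat := \sum_(q in S) wt q.
Definition succ_weight (p : 'I_n) (x : bool) : nat := \sum_(q | nfa_delta A p x q) wt q.

Lemma weight_step S x : weight (nfa_step S x) <= \sum_(p in S) succ_weight p x.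
Proof.
apply: (@leq_trans (\sum_q \sum_(p in S) nfa_delta A p x q * wt q)).
  rewrite [X in X <= _]big_mkcond /=; apply: leq_sum => q _.
  case: ifP => [/[!inE] /exists_inP[p pS dp] | _] //.
  by rewrite (bigD1 p) //= dp mul1n leq_addr.
rewrite exchange_big /=; apply: leq_sum => p _.
rewrite [X in _ <= X]big_mkcond /=; apply: leq_sum => q _.
by case: (nfa_delta A p x q); rewrite ?mul1n.
Qed.

Hypothesis succ_weight_le : forall p x, succ_weight p x <= wt p.

Lemma weight_step_le S x : weight (nfa_step S x) <= weight S.
Proof. by apply: leq_trans (weight_step S x) _; apply: leq_sum. Qed.

Lemma weight_reach_cat_le w u : weight (nfa_reach (w ++ u)) <= weight (nfa_reach w).
Proof.
elim/last_ind: u => [|u x IHu]; first by rewrite cats0.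
by rewrite -rcons_cat nfa_reach_rcons; apply: leq_trans (weight_step_le _ _) IHu.
Qed.

Variable F : pred 'I_n.
Hypothesis succ_weight_lt :
  forall p x q, F q -> nfa_delta A p x q -> succ_weight p x < wt p.

Lemma weight_step_lt S x q :
  F q -> q \in nfa_step S x -> weight (nfa_step S x) < weight S.
Proof.
move=> Fq /[!inE] /exists_inP[p pS dq]; apply: leq_ltn_trans (weight_step S x) _.
rewrite /weight (bigD1 p) //= [X in _ < X](bigD1 p) //= -addSn.
by rewrite leq_add ?(succ_weight_lt Fq dq) ?leq_sum.
Qed.

Lemma weight_reach_lt w u q : u != [::] -> F q -> q \in nfa_reach (w ++ u) ->
  weight (nfa_reach (w ++ u)) < weight (nfa_reach w).
Proof.
case/lastP: u => // u x _ Fq; rewrite -rcons_cat nfa_reach_rcons => qwux.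
exact: leq_trans (weight_step_lt Fq qwux) (weight_reach_cat_le w u).
Qed.

End SubsetConstruction.

Lemma no_inf_tower (K L : word -> Prop) (f : word -> nat) :
  (forall w, K w -> L w -> False) ->
  (forall w u, u != [::] -> K (w ++ u) \/ L (w ++ u) -> f (w ++ u) < f w) ->
  ~ exists w, inf_tower K L w.
Proof.
move=> KL f_lt [w [w0KL wS]].
have wKL i : K (w i) \/ L (w i).
  elim: i => // i [Ki|Li]; have [_ [KL' LK]] := wS i; [right; exact: KL' | left; exact: LK].
have f_dec i : f (w i.+1) < f (w i).
  have [[u wu] [KL' LK]] := wS i.
  have u_nil : u != [::].
    apply/eqP=> u0; move: wu KL' LK; rewrite u0 cats0 => ->.
    by case: (wKL i) => [Ki KL' _ | Li _ LK]; [exact: KL Ki (KL' Ki) | exact: KL (LK Li) Li].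
  by rewrite wu f_lt // -wu.
have f_le i : f (w i) + i <= f (w 0).
  by elim: i => [|i IHi]; [rewrite addn0 | have := f_dec i; lia].
by have := f_le (f (w 0)).+1; lia.
Qed.

Lemma tower_alternating (K L : word -> Prop) (w : nat -> word) (b : nat -> bool) m :
  (forall v, K v -> L v -> False) -> 0 < m ->
  (forall i, is_prefix (w i) (w i.+1)) ->
  (forall i, i < m -> if b i then K (w i) else L (w i)) ->
  (forall i, b i.+1 = ~~ b i) ->
  tower K L (mkseq w m).
Proof.
move=> KL m_gt0 w_pre w_in b_alt; rewrite /tower size_mkseq nth_mkseq //.
split=> //; split; first by have := w_in 0 m_gt0; case: (b 0) => ?; [left | right].
move=> i im; rewrite !nth_mkseq ?(ltnW im) //; split; first exact: w_pre.
have := w_in i (ltnW im); have := w_in i.+1 im; rewrite b_alt.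
by case: (b i) => /= wi1 wi; split=> // wi'; [case: (KL _ wi wi') | case: (KL _ wi' wi)].
Qed.

Lemma sum_val_eq_le n (f : nat -> nat) t : \sum_(q : 'I_n | val q == t) f q <= f t.
Proof.
have [tn | nt] := ltnP t n; first by rewrite (big_pred1 (Ordinal tn)) // => q; rewrite -val_eqE.
by rewrite big_pred0 // => q; apply/negbTE/eqP => qt; move: (ltn_ord q); rewrite qt; lia.
Qed.

Fixpoint bits_dec (bs : seq bool) : seq bool :=
  if bs is b :: bs' then (if b then false :: bs' else true :: bits_dec bs') else [::].

Fixpoint bits_val (bs : seq bool) : nat :=
  if bs is b :: bs' then b + 2 * bits_val bs' else 0.

Lemma size_bits_dec bs : size (bits_dec bs) = size bs.
Proof. by elim: bs => [|[] bs IHbs] //=; rewrite IHbs. Qed.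

Lemma bits_val_dec bs : 0 < bits_val bs -> bits_val (bits_dec bs) = (bits_val bs).-1.
Proof. by elim: bs => [|[] bs IHbs] //= bs_gt0; rewrite IHbs; lia. Qed.

Lemma bits_val_nseq t : bits_val (nseq t true) = (2 ^ t).-1.
Proof. by elim: t => [|t IHt] //=; rewrite IHt expnS; have := expn_gt0 2 t; lia. Qed.

Lemma bits_val_gt0 bs : 0 < bits_val bs -> true \in bs.
Proof. by elim: bs => [|[] bs IHbs] //= bs_gt0; rewrite inE IHbs //; lia. Qed.

Lemma nth_bits_dec bs j : true \in bs ->
  nth false (bits_dec bs) j =
    if j < index true bs then true else if j == index true bs then false else nth false bs j.
Proof. by elim: bs j => [|[] bs IHbs] [|j] //= /[!inE] bs_true; rewrite IHbs. Qed.

Lemma head_bits_dec bs : 0 < size bs -> nth false (bits_dec bs) 0 = ~~ nth false bs 0.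
Proof. by case: bs => [|[] bs]. Qed.

Section Counter.
Variable T : nat.
Hypothesis T_gt0 : 0 < T.
Local Notation N := (T * T).+2.

Definition marker (j : nat) : nat := if j == 0 then T * T else (T * T).+1.

Definition counter_delta (s : nat) (x : bool) (s' : nat) : bool :=
  (s < T * T) &&
  if x then ((s %/ T).+1 < T) && (s' == s + T)
  else if s %/ T != s %% T then s' == s %% T
  else (s' < s %% T) || (s' == marker (s %% T)).

Definition counter_nfa (final : nat -> bool) : nfa N :=
  NFA (fun p x q => counter_delta p x q) (fun p => p < T) (fun q => final q).

Definition counterK := counter_nfa (pred1 (T * T)).
Definition counterL := counter_nfa (pred1 (T * T).+1).

Lemma grid_lt j c : j < T -> c < T -> j + c * T < T * T.
Proof. nia. Qed.

Lemma grid_div j c : j < T -> (j + c * T) %/ T = c.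
Proof. by move=> jT; rewrite divnDMl // divn_small. Qed.

Lemma grid_mod j c : j < T -> (j + c * T) %% T = j.
Proof. by move=> jT; rewrite addnC modnMDl modn_small. Qed.

Lemma grid_split s : s = s %% T + s %/ T * T.
Proof. by rewrite addnC -divn_eq. Qed.

Lemma marker_ge j : T * T <= marker j.
Proof. by rewrite /marker; case: ifP. Qed.

Lemma marker_lt j : marker j < N.
Proof. by rewrite /marker; case: ifP. Qed.

Lemma counter_delta_marker s x s' : T * T <= s' -> counter_delta s x s' ->
  [/\ s < T * T, x = false, s %/ T = s %% T & s' = marker (s %% T)].
Proof.
move=> s'_ge /andP[sT]; have := ltn_pmod s T_gt0.
case: x => jT; first by case/andP=> rowT /eqP s's; have := grid_split s; nia.
case: eqP => [diag /orP[s'j | /eqP s'm] | _ /eqP s'j]; [nia | by [] | nia].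
Qed.

Definition counter_weight (s : nat) : nat := if s < T * T then 2 ^ (s %% T) else 0.

Local Notation wt := (fun q : 'I_N => counter_weight q).

Lemma succ_weight_single fin (p : 'I_N) x t :
  (forall q : 'I_N, counter_delta p x q -> val q = t) ->
  succ_weight (counter_nfa fin) wt p x <= counter_weight t.
Proof.
move=> succ_t; apply: leq_trans (sum_val_eq_le N counter_weight t).
by apply: (sub_le_big leqnn (fun m n => leq_addr n m)) => q /succ_t ->.
Qed.

Lemma succ_weight_diag fin (p : 'I_N) : p < T * T -> p %/ T = p %% T ->
  succ_weight (counter_nfa fin) wt p false < wt p.
Proof.
move=> pT diag; set j := p %% T; have jT : j < T := ltn_pmod p T_gt0.
rewrite /succ_weight /= /counter_delta pT diag eqxx /= /counter_weight pT -/j.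
apply: (@leq_ltn_trans (\sum_(q : 'I_N | q < j) 2 ^ (q : nat))).
  rewrite [X in X <= _]big_mkcond [X in _ <= X]big_mkcond /=; apply: leq_sum => q _.
  case: ltnP => [qj | jq] /=; first by rewrite ifT ?modn_small //; nia.
  by case: eqP => // ->; rewrite ltnNge marker_ge.
rewrite -(big_ord_widen _ (fun i => 2 ^ i)); last by nia.
by rewrite -[X in _ < X]prednK ?expn_gt0 // predn_exp mul1n.
Qed.

Lemma counter_succ_weight_le fin (p : 'I_N) x :
  succ_weight (counter_nfa fin) wt p x <= wt p.
Proof.
have [pT | Tp] := ltnP p (T * T); last first.
  by rewrite /succ_weight big_pred0 // => q; rewrite /= /counter_delta ltnNge Tp.
have jT : p %% T < T := ltn_pmod p T_gt0.
case: x.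
  apply: leq_trans (succ_weight_single _ (t := p + T) _) _.
    by move=> q /andP[_ /andP[_ /eqP]].
  by rewrite /counter_weight pT modnDr; case: ifP.
case: (eqVneq (p %/ T) (p %% T)) => [diag | off]; first exact/ltnW/succ_weight_diag.
apply: leq_trans (succ_weight_single _ (t := p %% T) _) _.
  by move=> q; rewrite /= /counter_delta pT off => /eqP.
by rewrite /counter_weight pT modn_mod ifT //; nia.
Qed.

Lemma counter_succ_weight_lt fin (p : 'I_N) x (q : 'I_N) : T * T <= q ->
  counter_delta p x q -> succ_weight (counter_nfa fin) wt p x < wt p.
Proof.
by move=> qT /(counter_delta_marker qT) [pT -> diag _]; apply: succ_weight_diag.
Qed.

Definition trailing_trues (w : word) : nat := index false (rev w).

Lemma trailing_trues_rcons w x :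
  trailing_trues (rcons w x) = if x then (trailing_trues w).+1 else 0.
Proof. by rewrite /trailing_trues rev_rcons; case: x. Qed.

Lemma reach_row fin w (q : 'I_N) : q \in nfa_reach (counter_nfa fin) w -> q < T * T ->
  q %/ T = trailing_trues w.
Proof.
elim/last_ind: w q => [|w x IHw] q; first by rewrite inE => qT _; rewrite divn_small.
rewrite nfa_reach_rcons trailing_trues_rcons inE => /exists_inP[r rw /andP[rT drq]] qT.
have rrow := IHw r rw rT; have rjT := ltn_pmod r T_gt0.
case: x drq => [/andP[_ /eqP ->] | drq].
  by rewrite -[T in _ + T]mul1n divnDMl // rrow addn1.
apply: divn_small; move: drq; case: ifP => _; first by move/eqP->.
case/orP=> [/ltn_trans-> // | /eqP qm].
by move: qT; rewrite qm ltnNge marker_ge.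
Qed.

Lemma reach_marker fin w x (q : 'I_N) : q \in nfa_reach (counter_nfa fin) (rcons w x) ->
  T * T <= q -> q = marker (trailing_trues w) :> nat.
Proof.
rewrite nfa_reach_rcons inE => /exists_inP[r rw drq] qT.
by have [rT _ diag ->] := counter_delta_marker qT drq; rewrite -diag (reach_row rw rT).
Qed.

Lemma counter_lang_disjoint w : lang counterK w -> lang counterL w -> False.
Proof.
move=> /lang_reach[q /eqP qK qw] /lang_reach[q' /eqP q'L q'w].
case/lastP: w qw q'w => [|w x] qw q'w; first by move: qw; rewrite inE /= qK; nia.
have := reach_marker qw; have := reach_marker q'w; rewrite qK q'L; lia.
Qed.

Lemma counter_no_inf_tower : ~ exists w, inf_tower (lang counterK) (lang counterL) w.
Proof.
apply: (no_inf_tower (f := fun w => weight wt (nfa_reach counterK w))).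
  exact: counter_lang_disjoint.
move=> w u u_nil wuKL.
have [q qT qwu] : exists2 q : 'I_N, T * T <= q & q \in nfa_reach counterK (w ++ u).
  by case: wuKL => /lang_reach[q /eqP qf qwu]; exists q => //; rewrite qf.
exact: (weight_reach_lt (F := fun q : 'I_N => T * T <= q)
  (counter_succ_weight_le _) (counter_succ_weight_lt _) u_nil qT qwu).
Qed.

Lemma counter_delta_up j c : j < T -> c.+1 < T ->
  counter_delta (j + c * T) true (j + c.+1 * T).
Proof.
move=> jT cT; rewrite /counter_delta grid_lt ?grid_div //; last lia.
by rewrite cT mulSnr addnA eqxx.
Qed.

Lemma counter_delta_diag_low i j : i < j -> j < T -> counter_delta (j + j * T) false i.
Proof. by move=> ij jT; rewrite /counter_delta grid_lt ?grid_div ?grid_mod // eqxx ij. Qed.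

Lemma counter_delta_diag_marker j : j < T -> counter_delta (j + j * T) false (marker j).
Proof. by move=> jT; rewrite /counter_delta grid_lt ?grid_div ?grid_mod // eqxx /= eqxx orbT. Qed.

Lemma counter_delta_off_diag j c : j < T -> c < T -> c != j ->
  counter_delta (j + c * T) false j.
Proof. by move=> jT cT cj; rewrite /counter_delta grid_lt ?grid_div ?grid_mod // cj eqxx. Qed.

Lemma run_climb fin j c d : j < T -> c + d < T ->
  nfa_run (counter_nfa fin) (inord (j + c * T)) (nseq d true) (inord (j + (c + d) * T)).
Proof.
move=> jT; elim: d c => [|d IHd] c cdT /=; first by rewrite addn0.
exists (inord (j + c.+1 * T)); split; last by rewrite -addSnnS; apply: IHd; rewrite addSnnS.
by rewrite /= !inordK ?counter_delta_up //; nia.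
Qed.

Definition dec_word (bs : seq bool) : word := nseq (index true bs) true ++ [:: false].

Lemma run_dec_word fin bs j t : j < T -> index true bs < T -> t < N ->
  counter_delta (j + index true bs * T) false t ->
  nfa_run (counter_nfa fin) (inord j) (dec_word bs) (inord t).
Proof.
move=> jT nuT tN dt; apply: (nfa_run_cat (r := inord (j + index true bs * T))).
  by have := run_climb fin jT (c := 0) nuT; rewrite mul0n addn0.
by exists (inord t); split; rewrite //= !inordK //; nia.
Qed.

Definition bits_reached fin (bs : seq bool) (w : word) : Prop :=
  forall j, j < T -> nth false bs j -> inord j \in nfa_reach (counter_nfa fin) w.

Lemma reach_dec_marker fin bs w : size bs = T -> true \in bs -> bits_reached fin bs w ->
  inord (marker (index true bs)) \in nfa_reach (counter_nfa fin) (w ++ dec_word bs).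
Proof.
move=> sizeT bs_true reached; have nuT : index true bs < T by rewrite -sizeT index_mem.
apply: (mem_nfa_reach_cat (reached _ nuT (nth_index false bs_true))).
exact: run_dec_word (marker_lt _) (counter_delta_diag_marker nuT).
Qed.

Lemma bits_reached_dec fin bs w : size bs = T -> true \in bs -> bits_reached fin bs w ->
  bits_reached fin (bits_dec bs) (w ++ dec_word bs).
Proof.
move=> sizeT bs_true reached j jT; have nuT : index true bs < T by rewrite -sizeT index_mem.
have jN : j < N by nia.
rewrite nth_bits_dec //; case: ltngtP => // [j_nu | nu_j] bit.
  apply: (mem_nfa_reach_cat (reached _ nuT (nth_index false bs_true))).
  exact: run_dec_word jN (counter_delta_diag_low j_nu nuT).
apply: (mem_nfa_reach_cat (reached _ jT bit)).
exact: run_dec_word jN (counter_delta_off_diag jT nuT (negbT (ltn_eqF nu_j))).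
Qed.

Definition countdown_bits (i : nat) : seq bool := iter i bits_dec (nseq T true).

Fixpoint countdown_word (i : nat) : word :=
  if i is i'.+1 then countdown_word i' ++ dec_word (countdown_bits i') else [::].

Lemma size_countdown_bits i : size (countdown_bits i) = T.
Proof. by elim: i => [|i IHi]; rewrite /= ?size_bits_dec ?size_nseq. Qed.

Lemma bits_val_countdown i : i <= (2 ^ T).-1 -> bits_val (countdown_bits i) = (2 ^ T).-1 - i.
Proof.
elim: i => [|i IHi] iT; first by rewrite /countdown_bits /= bits_val_nseq subn0.
by rewrite /countdown_bits iterS bits_val_dec -/(countdown_bits i) IHi //; lia.
Qed.

Lemma true_in_countdown_bits i : i < (2 ^ T).-1 -> true \in countdown_bits i.
Proof. by move=> iT; apply: bits_val_gt0; rewrite bits_val_countdown ?subn_gt0 // ltnW. Qed.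

Lemma countdown_reached fin i : i <= (2 ^ T).-1 ->
  bits_reached fin (countdown_bits i) (countdown_word i).
Proof.
elim: i => [|i IHi] iT; first by move=> j jT _; rewrite inE /= inordK //; nia.
apply: bits_reached_dec; rewrite ?size_countdown_bits ?true_in_countdown_bits //.
exact/IHi/ltnW.
Qed.

Lemma countdown_lang i : i < (2 ^ T).-1 ->
  if nth false (countdown_bits i) 0 then lang counterK (countdown_word i.+1)
  else lang counterL (countdown_word i.+1).
Proof.
move=> iT; set m := marker (index true (countdown_bits i)).
have m_in fin : inord m \in nfa_reach (counter_nfa fin) (countdown_word i.+1).
  exact: reach_dec_marker (size_countdown_bits i) (true_in_countdown_bits iT)
    (countdown_reached fin (ltnW iT)).
have m_final : m = if nth false (countdown_bits i) 0 then T * T else (T * T).+1.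
  by rewrite /m; case: (countdown_bits i) (size_countdown_bits i) => [|[] bs] //= T0; lia.
by case: ifP m_final => _ m_eq; apply/lang_reach; exists (inord m);
  rewrite ?m_in // /= inordK m_eq.
Qed.

Lemma countdown_tower :
  tower (lang counterK) (lang counterL) (mkseq (fun i => countdown_word i.+1) (2 ^ T).-1).
Proof.
apply: (tower_alternating (b := fun i => nth false (countdown_bits i) 0)).
- exact: counter_lang_disjoint.
- by have := ltn_expl T (isT : 1 < 2); lia.
- by move=> i; exists (dec_word (countdown_bits i.+1)).
- exact: countdown_lang.
- move=> i; rewrite /countdown_bits iterS head_bits_dec //.
  by rewrite -/(countdown_bits i) size_countdown_bits.
Qed.

End Counter.

Lemma exp_gt_poly c k N : exists2 T, N < T & c * T ^ k + c < (2 ^ T).-1.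
Proof.
have [p p_def] : {p | p = (2 * k + c + N).+1} by exists (2 * k + c + N).+1.
have p_lt : p < 2 ^ p := ltn_expl p (isT : 1 < 2).
have c_lt : c < 2 ^ c := ltn_expl c (isT : 1 < 2).
exists (2 ^ p * 2 ^ p); first by nia.
have T_ge : c + 2 * p * k + 2 <= 2 ^ p * 2 ^ p by nia.
move: T_ge; set T := 2 ^ p * 2 ^ p => T_ge.
have Tk : T ^ k = 2 ^ (2 * p * k) by rewrite /T -expnD addnn -mul2n -expnM.
have poly_lt : c * T ^ k + c < 2 ^ (c + 2 * p * k).+1.
  rewrite Tk expnS expnD; have := expn_gt0 2 (2 * p * k); nia.
have : 2 ^ (c + 2 * p * k).+1 <= 2 ^ T.-1 by rewrite leq_exp2l //; lia.
have : 2 ^ T = 2 * 2 ^ T.-1 by rewrite -expnS prednK //; lia.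
have := expn_gt0 2 T.-1; lia.
Qed.

Theorem corollary17 :
  forall c k N : nat,
  exists n1 n2 : nat,
    [/\ 0 < n1, 0 < n2, N <= n1 + n2 &
    exists (A : nfa n1) (B : nfa n2),
      (~ exists w : nat -> word, inf_tower (lang A) (lang B) w) /\
      exists ws : seq word,
        tower (lang A) (lang B) ws /\
        c * (n1 + n2) ^ k + c < height ws].
Proof.
move=> c k N.
have [T NT T_bound] := exp_gt_poly (c * 6 ^ k) (2 * k) N.
have T_gt0 : 0 < T by lia.
exists (T * T).+2, (T * T).+2; split=> //; first by nia.
exists (counterK T), (counterL T); split; first exact: counter_no_inf_tower.
exists (mkseq (fun i => countdown_word T i.+1) (2 ^ T).-1).
split; first exact: countdown_tower.
rewrite /height size_mkseq; apply: leq_ltn_trans T_bound.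
have states_le : (T * T).+2 + (T * T).+2 <= 6 * T ^ 2 by nia.
have : ((T * T).+2 + (T * T).+2) ^ k <= 6 ^ k * T ^ (2 * k).
  by rewrite expnM -expnMn; case: k => [|k] //; rewrite leq_exp2r.
have := expn_gt0 6 k; nia.
Qed.
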